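(* Let $\Re(p)>0$ and $\Re(\mu)>\Re(\eta)>0$. Then $$\mathfrak{D}_{z}^{\eta-\mu}\left\{z^{\eta-1}\,{}_m\Psi_n\!\left[\begin{array}{c}(\alpha_i,A_i)_{1,m}\\(\beta_j,B_j)_{1,n}\end{array}\Big|\,z\right];p\right\}=z^{\mu-1}\,{}_{m+1}\Psi_{n+1}\!\left[\begin{array}{c}(\alpha_i,A_i)_{1,m},(\eta,1)\\(\beta_j,B_j)_{1,n},(\mu,1)\end{array}\Big|\,(z;p)\right].$$
   Context: For $\Re(\nu)<0$, $\mathfrak{D}_{z}^{\nu}\{f(z);p\}=\frac{1}{\Gamma(-\nu)}\int_0^z f(t)(z-t)^{-\nu-1}\exp\!\left(-\frac{pz^2}{t(z-t)}\right)dt$. $B_p(a,b)=\int_0^1 t^{a-1}(1-t)^{b-1}e^{-\frac{p}{t(1-t)}}dt$. The Fox–Wright function is ${}_m\Psi_n\!\left[\begin{array}{c}(\alpha_i,A_i)_{1,m}\\(\beta_j,B_j)_{1,n}\end{array}\Big|\,z\right]=\sum_{k=0}^\infty\frac{\prod_{i=1}^{m}\Gamma(\alpha_i+A_ik)}{\prod_{j=1}^{n}\Gamma(\beta_j+B_jk)}\frac{z^k}{k!}$, and the extended Wright function is ${}_{m+1}\Psi_{n+1}\!\left[\begin{array}{c}(\alpha_i,A_i)_{1,m},(\gamma,1)\\(\beta_j,B_j)_{1,n},(c,1)\end{array}\Big|\,(z;p)\right]=\frac{1}{\Gamma(c-\gamma)}\sum_{k=0}^\infty\frac{\prod_{i=1}^{m}\Gamma(\alpha_i+A_ik)}{\prod_{j=1}^{n}\Gamma(\beta_j+B_jk)}\frac{B_p(\gamma+k,c-\gamma)z^k}{k!}$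 for $\Re(c)>\Re(\gamma)>0$. *)

From Stdlib Require Import Reals Factorial.
From Coquelicot Require Import Coquelicot.
Open Scope R_scope.

(** Principal argument in (-PI, PI], with Carg 0 = 0. *)
Definition Carg (z : C) : R :=
  let x := fst z in let y := snd z in
  if Rlt_dec 0 x then atan (y / x)
  else if Rlt_dec x 0 then
    (if Rle_dec 0 y then atan (y / x) + PI else atan (y / x) - PI)
  else (if Rlt_dec 0 y then PI / 2 else if Rlt_dec y 0 then - (PI / 2) else 0).

Definition Cexp (z : C) : C :=
  (exp (fst z) * cos (snd z), exp (fst z) * sin (snd z)).
Definition Clog (z : C) : C := (ln (Cmod z), Carg z).

(** Principal complex power  z^s = exp (s Log z)  (convention 0^s = 0). *)
Definition Cpowc (z s : C) : C :=
  if Req_EM_T (Cmod z) 0 then RtoC 0 else Cexp (Cmult s (Clog z)).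

Definition Clim_seq (u : nat -> C) : C :=
  (real (Lim_seq (fun k => fst (u k))), real (Lim_seq (fun k => snd (u k)))).
Definition Cseries (a : nat -> C) : C :=
  (Series (fun k => fst (a k)), Series (fun k => snd (a k))).
Definition CRInt (f : R -> C) (a b : R) : C :=
  (RInt (fun t => fst (f t)) a b, RInt (fun t => snd (f t)) a b).

Fixpoint Cprod (f : nat -> C) (n : nat) : C :=
  match n with
  | O => RtoC 1
  | S n' => Cmult (Cprod f n') (f n')
  end.

(** Euler's Gamma function (Gauss' limit formula):
    Gamma(s) = lim_{N->oo} N! N^s / (s (s+1) ... (s+N)). *)
Definition CGamma (s : C) : C :=
  Clim_seq (fun N => Cdiv (Cmult (RtoC (INR (Factorial.fact N))) (Cpowc (RtoC (INR N)) s))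
                          (Cprod (fun k => Cplus s (RtoC (INR k))) (S N))).

(** Extended Riemann-Liouville fractional derivative (Re nu < 0):
    D_z^nu {f; p} = 1/Gamma(-nu) int_0^z f(t) (z-t)^(-nu-1) exp(-p z^2/(t(z-t))) dt,
    the integral being taken along the segment t = z u, u in [0,1]. *)
Definition fracD (nu : C) (f : C -> C) (p z : C) : C :=
  Cmult (Cinv (CGamma (Copp nu)))
    (CRInt (fun u =>
       let t := Cmult z (RtoC u) in
       Cmult (Cmult (Cmult (f t) (Cpowc (Cminus z t) (Cminus (Copp nu) (RtoC 1))))
                    (Cexp (Copp (Cdiv (Cmult p (Cmult z z)) (Cmult t (Cminus z t))))))
             z) 0 1).

Definition Beta_p (a b p : C) : C :=
  CRInt (fun t =>
    Cmult (Cmult (Cpowc (RtoC t) (Cminus a (RtoC 1)))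
                 (Cpowc (RtoC (1 - t)) (Cminus b (RtoC 1))))
          (Cexp (Copp (Cdiv p (RtoC (t * (1 - t))))))) 0 1.

Definition FWcoef (m n : nat) (alpha : nat -> C) (A : nat -> R)
    (beta : nat -> C) (B : nat -> R) (k : nat) : C :=
  Cdiv (Cprod (fun i => CGamma (Cplus (alpha i) (RtoC (A i * INR k)))) m)
       (Cprod (fun j => CGamma (Cplus (beta j) (RtoC (B j * INR k)))) n).

Definition FoxWright (m n : nat) (alpha : nat -> C) (A : nat -> R)
    (beta : nat -> C) (B : nat -> R) (z : C) : C :=
  Cseries (fun k => Cdiv (Cmult (FWcoef m n alpha A beta B k) (Cpow z k))
                         (RtoC (INR (Factorial.fact k)))).

(** Extended Wright function  m+1Psi_n+1[(alpha_i,A_i),(gam,1);(beta_j,B_j),(c,1) | (z;p)]. *)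
Definition ExtWright (m n : nat) (alpha : nat -> C) (A : nat -> R)
    (beta : nat -> C) (B : nat -> R) (gam c z p : C) : C :=
  Cmult (Cinv (CGamma (Cminus c gam)))
    (Cseries (fun k =>
       Cdiv (Cmult (Cmult (FWcoef m n alpha A beta B k)
                          (Beta_p (Cplus gam (RtoC (INR k))) (Cminus c gam) p))
                   (Cpow z k))
            (RtoC (INR (Factorial.fact k))))).

(* Substituting t = z u, the fractional integral becomes z^(mu-1) times the integral over
   [0,1] of  sum_k c_k z^k / k! * u^(eta+k-1) (1-u)^(mu-eta-1) exp(-p / (u (1-u))),
   whose k-th factor is exactly the integrand of B_p(eta+k, mu-eta).  Because Re p > 0,
   the factor exp(-Re p / (u (1-u))) beats the singularity 1 / (u (1-u)), so every such
   integrand is bounded by 4 / (Re p)^2, uniformly in k, and vanishes at both ends.  The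
   series is then dominated by the absolutely convergent Fox-Wright series at |z|, converges
   uniformly on [0,1] and can be integrated term by term. *)

From Stdlib Require Import Reals Factorial Lra Lia.
From Coquelicot Require Import Coquelicot.
Open Scope R_scope.

(** * Complex exponential and principal powers *)

Lemma Cexp_plus (a b : C) : Cexp (a + b)%C = (Cexp a * Cexp b)%C.
Proof.
  destruct a as [a1 a2], b as [b1 b2]; unfold Cexp; simpl.
  apply injective_projections; simpl; rewrite exp_plus, ?cos_plus, ?sin_plus; ring.
Qed.

Lemma Cexp_RtoC (r : R) : Cexp r = exp r.
Proof. unfold Cexp; simpl. rewrite cos_0, sin_0. apply injective_projections; simpl; ring. Qed.

Lemma Cmod_Cexp (a : C) : Cmod (Cexp a) = exp (fst a).
Proof.
  destruct a as [a1 a2]; unfold Cexp, Cmod; cbn [fst snd].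
  replace ((exp a1 * cos a2) ^ 2 + (exp a1 * sin a2) ^ 2)
    with ((exp a1)² * ((sin a2)² + (cos a2)²)) by (unfold Rsqr; ring).
  rewrite sin2_cos2, Rmult_1_r. apply sqrt_Rsqr. left; apply exp_pos.
Qed.

Lemma Carg_RtoC_pos (u : R) : 0 < u -> Carg u = 0.
Proof.
  intros Hu. unfold Carg; simpl. destruct (Rlt_dec 0 u); [|lra].
  unfold Rdiv. rewrite Rmult_0_l. apply atan_0.
Qed.

Lemma Carg_scale (z : C) (u : R) : 0 < u -> Carg (z * u)%C = Carg z.
Proof.
  intros Hu. destruct z as [x y].
  replace ((x, y) * u)%C with (x * u, y * u) by (apply injective_projections; simpl; ring).
  unfold Carg; simpl.
  replace (y * u / (x * u)) with (y / x).
  2: { destruct (Req_dec x 0) as [->|Hx].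
       - unfold Rdiv. rewrite Rmult_0_l, !Rinv_0. ring.
       - field; lra. }
  repeat destruct Rlt_dec; repeat destruct Rle_dec; try reflexivity; nra.
Qed.

Lemma Cmod_factor (x y : R) : x <> 0 -> Cmod (x, y) = Rabs x * sqrt (1 + (y / x)²).
Proof.
  intros Hx. unfold Cmod; simpl.
  rewrite <- sqrt_Rsqr_abs, <- sqrt_mult_alt by apply Rle_0_sqr.
  f_equal. unfold Rsqr. field. exact Hx.
Qed.

Lemma Cexp_Clog (z : C) : z <> 0%C -> Cexp (Clog z) = z.
Proof.
  destruct z as [x y]; intros Hz.
  assert (Hm : 0 < Cmod (x, y)) by (apply Cmod_gt_0; exact Hz).
  unfold Cexp, Clog; cbn [fst snd]. rewrite exp_ln by exact Hm.
  assert (Hq : 0 < sqrt (1 + (y / x)²)).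
  { apply sqrt_lt_R0. generalize (Rle_0_sqr (y / x)); lra. }
  unfold Carg; cbn [fst snd].
  destruct (Rlt_dec 0 x); [|destruct (Rlt_dec x 0)].
  - rewrite Cmod_factor, cos_atan, sin_atan, Rabs_pos_eq by lra.
    apply injective_projections; simpl; field; lra.
  - rewrite Cmod_factor, Rabs_left by lra.
    destruct (Rle_dec 0 y).
    + rewrite neg_cos, neg_sin, cos_atan, sin_atan.
      apply injective_projections; simpl; field; lra.
    + rewrite cos_minus, sin_minus, cos_PI, sin_PI, cos_atan, sin_atan.
      apply injective_projections; simpl; field; lra.
  - assert (x = 0) as -> by lra.
    assert (Hy : y <> 0) by (intros ->; apply Hz; reflexivity).
    replace (Cmod (0, y)) with (Rabs y)
      by (unfold Cmod; simpl; rewrite <- sqrt_Rsqr_abs; f_equal; unfold Rsqr; ring).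
    destruct (Rlt_dec 0 y); [|destruct (Rlt_dec y 0); [|lra]].
    + rewrite cos_PI2, sin_PI2, Rabs_pos_eq by lra.
      apply injective_projections; simpl; ring.
    + rewrite cos_neg, sin_neg, cos_PI2, sin_PI2, Rabs_left by lra.
      apply injective_projections; simpl; ring.
Qed.

Lemma Cpowc_RtoC_pos (u : R) (s : C) : 0 < u -> Cpowc u s = Cexp (s * ln u)%C.
Proof.
  intros Hu. unfold Cpowc, Clog. rewrite Cmod_R, Rabs_pos_eq by lra.
  destruct (Req_EM_T u 0); [lra|]. rewrite Carg_RtoC_pos by exact Hu. reflexivity.
Qed.

Lemma Cpowc_0 (s : C) : Cpowc 0 s = 0%C.
Proof.
  unfold Cpowc. rewrite Cmod_R, Rabs_R0. destruct (Req_EM_T 0 0); [reflexivity|lra].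
Qed.

Lemma Cpowc_1 (z : C) : z <> 0%C -> Cpowc z 1 = z.
Proof.
  intros Hz. unfold Cpowc. destruct (Req_EM_T (Cmod z) 0) as [E|_].
  - apply Cmod_eq_0 in E. contradiction.
  - rewrite Cmult_1_l. apply Cexp_Clog, Hz.
Qed.

Lemma Cpowc_plus (z a b : C) : z <> 0%C -> Cpowc z (a + b) = (Cpowc z a * Cpowc z b)%C.
Proof.
  intros Hz. unfold Cpowc. destruct (Req_EM_T (Cmod z) 0) as [E|_].
  - apply Cmod_eq_0 in E. contradiction.
  - rewrite <- Cexp_plus. f_equal. ring.
Qed.

Lemma Cpowc_mult_RtoC (z : C) (u : R) (s : C) : z <> 0%C -> 0 < u ->
  Cpowc (z * u) s = (Cpowc z s * Cpowc u s)%C.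
Proof.
  intros Hz Hu. rewrite Cpowc_RtoC_pos by exact Hu.
  assert (Hm : 0 < Cmod z) by (apply Cmod_gt_0, Hz).
  unfold Cpowc, Clog. rewrite Cmod_mult, Cmod_R, Rabs_pos_eq by lra.
  destruct (Req_EM_T (Cmod z * u) 0); [nra|].
  destruct (Req_EM_T (Cmod z) 0); [lra|].
  rewrite <- Cexp_plus, Carg_scale, ln_mult by lra. f_equal.
  apply injective_projections; simpl; ring.
Qed.

Lemma Cpowc_RtoC_plus_nat (u : R) (s : C) (k : nat) : 0 < u ->
  Cpowc u (s + INR k - 1) = (Cpowc u (s - 1) * Cpow u k)%C.
Proof.
  intros Hu. rewrite !Cpowc_RtoC_pos by exact Hu.
  replace ((s + INR k - 1) * ln u)%C with ((s - 1) * ln u + (INR k * ln u)%R)%C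
    by (rewrite RtoC_mult; ring).
  rewrite Cexp_plus, Cexp_RtoC, <- RtoC_pow, <- Rpower_pow by exact Hu.
  reflexivity.
Qed.

(** * Term-by-term integration over [0,1] *)

Lemma locally_01 (v : R) : 0 < v < 1 -> locally v (fun y => 0 < y < 1).
Proof.
  intros Hv. apply (locally_interval _ v 0 1); simpl; tauto.
Qed.

Lemma continuous_of_Rabs_le (h : R -> R) (c x : R) :
  (forall y, Rabs (h y) <= c * Rabs (y - x)) -> continuous h x.
Proof.
  intros Hb.
  assert (Hc : 0 <= c).
  { specialize (Hb (x + 1)). replace (x + 1 - x) with 1 in Hb by ring.
    rewrite Rabs_R1 in Hb. generalize (Rabs_pos (h (x + 1))); lra. }
  assert (Hx : h x = 0).
  { specialize (Hb x). rewrite Rminus_diag, Rabs_R0, Rmult_0_r in Hb.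
    apply Rabs_eq_0. generalize (Rabs_pos (h x)); lra. }
  apply continuity_pt_filterlim. intros eps Heps.
  exists (eps / (c + 1)). split; [apply Rdiv_lt_0_compat; lra|].
  intros y [_ Hy]. simpl in *. unfold R_dist in *. rewrite Hx, Rminus_0_r.
  apply Rle_lt_trans with (c * Rabs (y - x)); [apply Hb|].
  apply Rle_lt_trans with ((c + 1) * Rabs (y - x)); [generalize (Rabs_pos (y - x)); nra|].
  apply Rmult_lt_reg_l with (/ (c + 1)); [apply Rinv_0_lt_compat; lra|].
  rewrite <- Rmult_assoc, Rinv_l, Rmult_1_l by lra. unfold Rdiv in Hy. lra.
Qed.

(* Precomposing with [clamp01] turns facts on [0,1] into facts on all of R, where
   continuity and uniform convergence are stated. *)
Definition clamp01 (u : R) : R := Rmax 0 (Rmin 1 u).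

Lemma clamp01_id (u : R) : 0 <= u <= 1 -> clamp01 u = u.
Proof. intros. unfold clamp01. rewrite Rmin_right by lra. rewrite Rmax_right; lra. Qed.

Lemma clamp01_range (u : R) : 0 <= clamp01 u <= 1.
Proof. unfold clamp01, Rmax, Rmin. repeat destruct Rle_dec; lra. Qed.

Lemma clamp01_id_Rmin_Rmax (u : R) : Rmin 0 1 < u < Rmax 0 1 -> clamp01 u = u.
Proof. rewrite Rmin_left, Rmax_right by lra. intros. apply clamp01_id. lra. Qed.

Lemma clamp01_mul_le_dist (x y : R) : x = 0 \/ x = 1 ->
  clamp01 y * (1 - clamp01 y) <= Rabs (y - x).
Proof.
  intros Hx. unfold clamp01, Rmax, Rmin.
  destruct Hx as [-> | ->]; repeat destruct Rle_dec; unfold Rabs; destruct Rcase_abs; nra.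
Qed.

Lemma ex_RInt_01_of_vanishing_ends (f : R -> R) (c : R) :
  (forall u, 0 <= u <= 1 -> Rabs (f u) <= c * (u * (1 - u))) ->
  (forall u, 0 < u < 1 -> continuous f u) -> ex_RInt f 0 1.
Proof.
  intros Hb Hf.
  assert (Hc : 0 <= c).
  { specialize (Hb (/ 2)). generalize (Rabs_pos (f (/ 2))). intros. nra. }
  apply ex_RInt_ext with (fun y => f (clamp01 y)).
  { intros x Hx. rewrite clamp01_id_Rmin_Rmax by exact Hx. reflexivity. }
  apply (ex_RInt_continuous (V := R_CompleteNormedModule)). intros x Hx.
  rewrite Rmin_left, Rmax_right in Hx by lra.
  destruct (Req_dec x 0) as [Hx0|Hx0]; [|destruct (Req_dec x 1) as [Hx1|Hx1]].
  1, 2: apply continuous_of_Rabs_le with c; intros y;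
    eapply Rle_trans; [apply Hb, clamp01_range|];
    apply Rmult_le_compat_l; [exact Hc | apply clamp01_mul_le_dist; tauto].
  apply continuous_ext_loc with f; [|apply Hf; lra].
  apply filter_imp with (2 := locally_01 x ltac:(lra)).
  intros y Hy. rewrite clamp01_id by lra. reflexivity.
Qed.

Lemma Rabs_Series_minus_sum_n_le (d M : nat -> R) (N : nat) :
  (forall k, Rabs (d k) <= M k) -> ex_series M ->
  Rabs (Series d - sum_n d N) <= Series M - sum_n M N.
Proof.
  intros Hd HM.
  assert (HdA : ex_series (fun k => Rabs (d k))).
  { apply (ex_series_le (V := R_CompleteNormedModule)) with M; [|exact HM].
    intros k. rewrite Rabs_Rabsolu. apply Hd. }
  assert (Hd' : ex_series d) by (apply ex_series_Rabs, HdA).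
  rewrite (Series_incr_n d (S N)), (Series_incr_n M (S N)) by (lia || assumption).
  simpl pred. rewrite !sum_n_Reals.
  replace (sum_f_R0 d N + Series (fun k => d (S N + k)%nat) - sum_f_R0 d N)
    with (Series (fun k => d (S N + k)%nat)) by ring.
  replace (sum_f_R0 M N + Series (fun k => M (S N + k)%nat) - sum_f_R0 M N)
    with (Series (fun k => M (S N + k)%nat)) by ring.
  eapply Rle_trans; [apply Series_Rabs, (ex_series_incr_n (fun k => Rabs (d k)) (S N)), HdA|].
  apply Series_le; [intros k; split; [apply Rabs_pos | apply Hd]|].
  apply (ex_series_incr_n M (S N)), HM.
Qed.

Lemma is_RInt_01_Series (phi : nat -> R -> R) (M : nat -> R) :
  (forall k, ex_RInt (phi k) 0 1) ->
  (forall k u, 0 <= u <= 1 -> Rabs (phi k u) <= M k) -> ex_series M ->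
  is_RInt (fun u => Series (fun k => phi k u)) 0 1 (Series (fun k => RInt (phi k) 0 1)).
Proof.
  intros Hphi Hb HM.
  set (psi := fun k u => phi k (clamp01 u)).
  assert (Hpsi : forall k u, Rabs (psi k u) <= M k) by (intros; apply Hb, clamp01_range).
  assert (HI : forall k, is_RInt (psi k) 0 1 (RInt (phi k) 0 1)).
  { intros k. apply is_RInt_ext with (phi k).
    - intros x Hx. unfold psi. rewrite clamp01_id_Rmin_Rmax by exact Hx. reflexivity.
    - apply (RInt_correct (V := R_CompleteNormedModule)), Hphi. }
  assert (HRI : ex_series (fun k => RInt (phi k) 0 1)).
  { apply (ex_series_le (V := R_CompleteNormedModule)) with M; [|exact HM].
    intros k. replace (M k) with ((1 - 0) * M k) by ring.
    apply abs_RInt_le_const; [lra | apply Hphi | intros; apply Hb; lra]. }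
  (* the partial sums of [psi] converge uniformly on R, with modulus given by the tails of [M] *)
  destruct (filterlim_RInt (fun N u => sum_n (fun k => psi k u) N) 0 1 eventually _
     (fun u => Series (fun k => psi k u)) (fun N => sum_n (fun k => RInt (phi k) 0 1) N))
    as [If [HIf HS]].
  - intros N. induction N as [|N IH].
    + apply is_RInt_ext with (psi 0%nat); [intros; rewrite sum_O; reflexivity|].
      rewrite sum_O. apply HI.
    + apply is_RInt_ext with (fun u => plus (sum_n (fun k => psi k u) N) (psi (S N) u));
        [intros; rewrite sum_Sn; reflexivity|].
      rewrite sum_Sn. apply (is_RInt_plus (V := R_NormedModule)); [exact IH | apply HI].
  - apply filterlim_locally. intros eps.
    destruct (proj1 (filterlim_locally _ _) (Series_correct _ HM) eps) as [N0 HN0].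
    exists N0. intros N HN u. specialize (HN0 N HN).
    change (Rabs (sum_n (fun k => psi k u) N - Series (fun k => psi k u)) < eps).
    change (Rabs (sum_n M N - Series M) < eps) in HN0.
    rewrite Rabs_minus_sym in HN0 |- *.
    eapply Rle_lt_trans; [|exact HN0]. eapply Rle_trans; [|apply Rle_abs].
    apply Rabs_Series_minus_sum_n_le; [intros k; apply Hpsi | exact HM].
  - replace (Series (fun k => RInt (phi k) 0 1)) with If.
    + apply is_RInt_ext with (2 := HS). intros x Hx.
      apply Series_ext. intros k. unfold psi. rewrite clamp01_id_Rmin_Rmax by exact Hx. reflexivity.
    + apply (filterlim_locally_unique (F := eventually)
               (fun N => sum_n (fun k => RInt (phi k) 0 1) N)); [exact HIf|].
      apply Series_correct, HRI.
Qed.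

Lemma Rabs_fst_le_Cmod (x : C) : Rabs (fst x) <= Cmod x.
Proof. generalize (Rmax_Cmod x) (Rmax_l (Rabs (fst x)) (Rabs (snd x))). lra. Qed.

Lemma Rabs_snd_le_Cmod (x : C) : Rabs (snd x) <= Cmod x.
Proof. generalize (Rmax_Cmod x) (Rmax_r (Rabs (fst x)) (Rabs (snd x))). lra. Qed.

Lemma ex_series_R_le (a b : nat -> R) :
  (forall k, Rabs (a k) <= b k) -> ex_series b -> ex_series a.
Proof. apply (ex_series_le (V := R_CompleteNormedModule)). Qed.

Lemma ex_series_R_scal_l (c : R) (a : nat -> R) :
  ex_series a -> ex_series (fun k => c * a k).
Proof. apply (ex_series_scal_l (V := R_NormedModule)). Qed.

Lemma Cseries_ext (a b : nat -> C) : (forall k, a k = b k) -> Cseries a = Cseries b.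
Proof. intros H. unfold Cseries. f_equal; apply Series_ext; intros k; rewrite H; reflexivity. Qed.

Lemma Cseries_Cmult_l (c : C) (a : nat -> C) : ex_series (fun k => Cmod (a k)) ->
  Cseries (fun k => c * a k)%C = (c * Cseries a)%C.
Proof.
  intros H.
  assert (H1 : ex_series (fun k => fst (a k)))
    by (apply ex_series_R_le with (2 := H); intros; apply Rabs_fst_le_Cmod).
  assert (H2 : ex_series (fun k => snd (a k)))
    by (apply ex_series_R_le with (2 := H); intros; apply Rabs_snd_le_Cmod).
  destruct c as [c1 c2]. unfold Cseries. apply injective_projections; simpl.
  - rewrite Series_minus, !Series_scal_l by (apply ex_series_R_scal_l; assumption). reflexivity.
  - rewrite Series_plus, !Series_scal_l by (apply ex_series_R_scal_l; assumption). reflexivity.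
Qed.

Definition ex_CRInt (f : R -> C) (a b : R) : Prop :=
  ex_RInt (fun t => fst (f t)) a b /\ ex_RInt (fun t => snd (f t)) a b.

Lemma CRInt_ext (f g : R -> C) (a b : R) :
  (forall t, Rmin a b < t < Rmax a b -> f t = g t) -> CRInt f a b = CRInt g a b.
Proof.
  intros H. unfold CRInt.
  f_equal; apply (RInt_ext (V := R_CompleteNormedModule)); intros t Ht; rewrite H by exact Ht;
    reflexivity.
Qed.

Lemma ex_CRInt_Cmult_l (K : C) (f : R -> C) (a b : R) :
  ex_CRInt f a b -> ex_CRInt (fun t => K * f t)%C a b.
Proof.
  destruct K as [K1 K2]. intros [H1 H2]. split.
  - apply (ex_RInt_ext (V := R_NormedModule))
      with (fun t => minus (scal K1 (fst (f t))) (scal K2 (snd (f t)))); [reflexivity|].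
    apply (ex_RInt_minus (V := R_NormedModule)); apply (ex_RInt_scal (V := R_NormedModule));
      assumption.
  - apply (ex_RInt_ext (V := R_NormedModule))
      with (fun t => plus (scal K1 (snd (f t))) (scal K2 (fst (f t)))).
    { intros. simpl. unfold plus, scal; simpl. unfold mult; simpl. ring. }
    apply (ex_RInt_plus (V := R_NormedModule)); apply (ex_RInt_scal (V := R_NormedModule));
      assumption.
Qed.

Lemma CRInt_Cmult_l (K : C) (f : R -> C) (a b : R) :
  ex_CRInt f a b -> CRInt (fun t => K * f t)%C a b = (K * CRInt f a b)%C.
Proof.
  destruct K as [K1 K2]. intros [H1 H2]. unfold CRInt. apply injective_projections; simpl.
  - rewrite (RInt_ext (V := R_CompleteNormedModule) _
      (fun t => minus (scal K1 (fst (f t))) (scal K2 (snd (f t))))) by reflexivity.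
    rewrite (RInt_minus (V := R_CompleteNormedModule)), !(RInt_scal (V := R_CompleteNormedModule))
      by (exact H1 || exact H2 || apply (ex_RInt_scal (V := R_NormedModule)); assumption).
    reflexivity.
  - rewrite (RInt_ext (V := R_CompleteNormedModule) _
      (fun t => plus (scal K1 (snd (f t))) (scal K2 (fst (f t))))).
    2: { intros. simpl. unfold plus, scal; simpl. unfold mult; simpl. ring. }
    rewrite (RInt_plus (V := R_CompleteNormedModule)), !(RInt_scal (V := R_CompleteNormedModule))
      by (exact H1 || exact H2 || apply (ex_RInt_scal (V := R_NormedModule)); assumption).
    reflexivity.
Qed.

Lemma Cmod_CRInt_le (f : R -> C) (a b M : R) : a <= b -> ex_CRInt f a b ->
  (forall t, a <= t <= b -> Cmod (f t) <= M) -> Cmod (CRInt f a b) <= sqrt 2 * ((b - a) * M).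
Proof.
  intros Hab [H1 H2] Hf.
  eapply Rle_trans; [apply Cmod_2Rmax|].
  apply Rmult_le_compat_l; [apply sqrt_pos|].
  unfold CRInt; simpl. apply Rmax_lub; apply abs_RInt_le_const; try assumption;
    intros t Ht; eapply Rle_trans; [apply Rabs_fst_le_Cmod | apply Hf, Ht |
                                    apply Rabs_snd_le_Cmod | apply Hf, Ht].
Qed.

Lemma CRInt_Cseries (Phi : nat -> R -> C) (M : nat -> R) :
  (forall k, ex_CRInt (Phi k) 0 1) ->
  (forall k u, 0 <= u <= 1 -> Cmod (Phi k u) <= M k) -> ex_series M ->
  CRInt (fun u => Cseries (fun k => Phi k u)) 0 1 = Cseries (fun k => CRInt (Phi k) 0 1).
Proof.
  intros Hi Hb HM. unfold CRInt, Cseries. apply injective_projections; simpl.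
  - apply (is_RInt_unique (V := R_CompleteNormedModule)), (is_RInt_01_Series _ M);
      [apply Hi | | exact HM].
    intros k u Hu. eapply Rle_trans; [apply Rabs_fst_le_Cmod | apply Hb, Hu].
  - apply (is_RInt_unique (V := R_CompleteNormedModule)), (is_RInt_01_Series _ M);
      [apply Hi | | exact HM].
    intros k u Hu. eapply Rle_trans; [apply Rabs_snd_le_Cmod | apply Hb, Hu].
Qed.

(** * The extended Beta integrand *)

Lemma exp_le_compat (x y : R) : x <= y -> exp x <= exp y.
Proof.
  intros [H | ->]; [left; apply exp_increasing, H | right; reflexivity].
Qed.

Lemma exp_neg_div_le (q r : R) : 0 < q -> 0 < r -> exp (- (q / r)) / r <= 4 * r / q ^ 2.
Proof.
  intros Hq Hr.
  set (s := q / (2 * r)).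
  assert (Hs : 0 < s) by (apply Rdiv_lt_0_compat; lra).
  assert (Hes : s < exp s) by (generalize (exp_ineq1_le s); lra).
  replace (- (q / r)) with (- (s + s)) by (unfold s; field; lra).
  rewrite exp_Ropp, exp_plus.
  apply Rle_trans with (/ (s * s) / r).
  - unfold Rdiv. apply Rmult_le_compat_r; [left; apply Rinv_0_lt_compat, Hr|].
    apply Rinv_le_contravar; nra.
  - right. unfold s. field. lra.
Qed.

Definition Beta_p_integrand (a b p : C) (t : R) : C :=
  (Cpowc t (a - 1) * Cpowc (1 - t)%R (b - 1) * Cexp (- (p / (t * (1 - t))%R)))%C.

Lemma Beta_p_CRInt (a b p : C) : Beta_p a b p = CRInt (Beta_p_integrand a b p) 0 1.
Proof. reflexivity. Qed.

(* The logarithm of the integrand on (0,1), in real coordinates so that [auto_derive] applies. *)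
Definition Beta_p_exponent (a b p : C) (u : R) : C :=
  ((fst a - 1) * ln u + (fst b - 1) * ln (1 - u) - fst p / (u * (1 - u)),
   snd a * ln u + snd b * ln (1 - u) - snd p / (u * (1 - u))).

Lemma Beta_p_integrand_exp (a b p : C) (u : R) : 0 < u < 1 ->
  Beta_p_integrand a b p u = Cexp (Beta_p_exponent a b p u).
Proof.
  intros Hu. unfold Beta_p_integrand. rewrite !Cpowc_RtoC_pos by lra.
  rewrite <- !Cexp_plus. f_equal.
  destruct a, b, p. unfold Beta_p_exponent.
  apply injective_projections; simpl; field; nra.
Qed.

Lemma Beta_p_integrand_0 (a b p : C) : Beta_p_integrand a b p 0 = 0%C.
Proof. unfold Beta_p_integrand. rewrite Cpowc_0. ring. Qed.

Lemma Beta_p_integrand_1 (a b p : C) : Beta_p_integrand a b p 1 = 0%C.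
Proof. unfold Beta_p_integrand. rewrite Rminus_diag, Cpowc_0. ring. Qed.

Section BetaIntegrandBounds.

Variables a b p : C.
Hypotheses (Ha : 0 <= fst a) (Hb : 0 <= fst b) (Hp : 0 < fst p).

(* With Re a, Re b >= 0 the powers contribute at most 1 / (u (1 - u)), which the factor
   exp (- Re p / (u (1 - u))) absorbs. *)
Lemma Cmod_Beta_p_integrand_le (u : R) : 0 <= u <= 1 ->
  Cmod (Beta_p_integrand a b p u) <= 4 / fst p ^ 2 * (u * (1 - u)).
Proof.
  intros Hu.
  assert (Hq : 0 < 4 / fst p ^ 2) by (apply Rdiv_lt_0_compat; [lra | apply pow_lt, Hp]).
  destruct (Req_dec u 0) as [->|H0]; [rewrite Beta_p_integrand_0, Cmod_0; nra|].
  destruct (Req_dec u 1) as [->|H1]; [rewrite Beta_p_integrand_1, Cmod_0; nra|].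
  assert (Hr : 0 < u * (1 - u)) by nra.
  rewrite Beta_p_integrand_exp, Cmod_Cexp by lra.
  apply Rle_trans with (exp (- (fst p / (u * (1 - u)))) / (u * (1 - u))).
  - replace (exp (- (fst p / (u * (1 - u)))) / (u * (1 - u)))
      with (exp (- ln (u * (1 - u)) + - (fst p / (u * (1 - u))))).
    2: { rewrite exp_plus, (exp_Ropp (ln _)), exp_ln by exact Hr. field. lra. }
    apply exp_le_compat.
    assert (Hlu : ln u < 0) by (rewrite <- ln_1; apply ln_increasing; lra).
    assert (Hlv : ln (1 - u) < 0) by (rewrite <- ln_1; apply ln_increasing; lra).
    unfold Beta_p_exponent; simpl. rewrite ln_mult by lra. nra.
  - eapply Rle_trans; [apply exp_neg_div_le; assumption|]. right. field. lra.
Qed.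

Lemma Cmod_Beta_p_integrand_le_const (u : R) : 0 <= u <= 1 ->
  Cmod (Beta_p_integrand a b p u) <= 4 / fst p ^ 2.
Proof.
  intros Hu. eapply Rle_trans; [apply Cmod_Beta_p_integrand_le, Hu|].
  assert (0 < 4 / fst p ^ 2) by (apply Rdiv_lt_0_compat; [lra | apply pow_lt, Hp]).
  nra.
Qed.

Lemma ex_CRInt_Beta_p_integrand : ex_CRInt (Beta_p_integrand a b p) 0 1.
Proof.
  split; apply ex_RInt_01_of_vanishing_ends with (4 / fst p ^ 2).
  - intros u Hu. eapply Rle_trans; [apply Rabs_fst_le_Cmod | apply Cmod_Beta_p_integrand_le, Hu].
  - intros v Hv.
    apply continuous_ext_loc with (fun y => fst (Cexp (Beta_p_exponent a b p y))).
    { apply filter_imp with (2 := locally_01 v Hv). intros y Hy.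
      rewrite Beta_p_integrand_exp by exact Hy. reflexivity. }
    apply (ex_derive_continuous (V := R_NormedModule)).
    unfold Cexp, Beta_p_exponent; simpl. auto_derive. repeat split; nra.
  - intros u Hu. eapply Rle_trans; [apply Rabs_snd_le_Cmod | apply Cmod_Beta_p_integrand_le, Hu].
  - intros v Hv.
    apply continuous_ext_loc with (fun y => snd (Cexp (Beta_p_exponent a b p y))).
    { apply filter_imp with (2 := locally_01 v Hv). intros y Hy.
      rewrite Beta_p_integrand_exp by exact Hy. reflexivity. }
    apply (ex_derive_continuous (V := R_NormedModule)).
    unfold Cexp, Beta_p_exponent; simpl. auto_derive. repeat split; nra.
Qed.

Lemma Cmod_Beta_p_le : Cmod (Beta_p a b p) <= sqrt 2 * (4 / fst p ^ 2).
Proof.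
  rewrite Beta_p_CRInt. replace (4 / fst p ^ 2) with ((1 - 0) * (4 / fst p ^ 2)) by ring.
  apply Cmod_CRInt_le;
    [lra | apply ex_CRInt_Beta_p_integrand | apply Cmod_Beta_p_integrand_le_const].
Qed.

End BetaIntegrandBounds.

(** * Term-by-term fractional integration of a power series *)

Definition power_term (c : nat -> C) (z : C) (k : nat) : C := (c k * z ^ k / INR (fact k))%C.

Lemma INR_fact_neq_0_C (k : nat) : RtoC (INR (fact k)) <> 0%C.
Proof. intros E. apply (INR_fact_neq_0 k). injection E. tauto. Qed.

Lemma Cmod_power_term (c : nat -> C) (z : C) (k : nat) :
  Cmod (power_term c z k) = Cmod (c k) * Cmod z ^ k / INR (fact k).
Proof.
  unfold power_term.
  rewrite Cmod_div, Cmod_mult, Cmod_pow, Cmod_R, Rabs_pos_eq by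
    (apply INR_fact_neq_0_C || (left; apply INR_fact_lt_0)).
  reflexivity.
Qed.

Section FracDPowerSeries.

Variables (c : nat -> C) (eta mu p z : C).
Hypotheses (Hp : 0 < fst p) (Heta : 0 < fst eta) (Hmu : fst eta < fst mu) (Hz : z <> 0%C)
  (Hconv : ex_series (fun k => Cmod (c k) * Cmod z ^ k / INR (fact k))).

Lemma ex_series_Cmod_power_term : ex_series (fun k => Cmod (power_term c z k)).
Proof.
  apply (ex_series_ext (fun k => Cmod (c k) * Cmod z ^ k / INR (fact k))); [|exact Hconv].
  intros k. symmetry. apply Cmod_power_term.
Qed.

Lemma fracD_integrand_term (u : R) (k : nat) : 0 < u < 1 ->
  (Cpowc (z * u) (eta - 1) * Cpowc (z - z * u) (mu - eta - 1)
   * Cexp (- (p * (z * z) / (z * u * (z - z * u)))) * z * power_term c (z * u) k)%C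
  = (Cpowc z (mu - 1) * power_term c z k * Beta_p_integrand (eta + INR k) (mu - eta) p u)%C.
Proof.
  intros Hu.
  assert (Hu0 : RtoC u <> 0%C) by (intros E; injection E; lra).
  assert (Hu1 : RtoC (1 - u) <> 0%C) by (intros E; injection E; lra).
  assert (Hzu : (z - z * u)%C = (z * (1 - u)%R)%C) by (rewrite RtoC_minus; ring).
  assert (Hexp : (p * (z * z) / (z * u * (z * (1 - u)%R)))%C = (p / (u * (1 - u))%R)%C)
    by (rewrite RtoC_mult; field; auto).
  assert (Hw : Cpowc z (mu - 1) = (Cpowc z (eta - 1) * Cpowc z (mu - eta - 1) * z)%C).
  { rewrite <- (Cpowc_1 z Hz) at 4. rewrite <- !Cpowc_plus by exact Hz. f_equal. ring. }
  rewrite Hzu, Hexp, Hw, !Cpowc_mult_RtoC by (assumption || lra).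
  unfold Beta_p_integrand, power_term.
  rewrite Cpowc_RtoC_plus_nat, Cpow_mult_l by lra.
  field. apply INR_fact_neq_0_C.
Qed.

Lemma fracD_integrand_expansion (u : R) : 0 < u < 1 ->
  (Cpowc (z * u) (eta - 1) * Cseries (power_term c (z * u)) * Cpowc (z - z * u) (mu - eta - 1)
   * Cexp (- (p * (z * z) / (z * u * (z - z * u)))) * z)%C
  = Cseries (fun k => Cpowc z (mu - 1) * power_term c z k
                      * Beta_p_integrand (eta + INR k) (mu - eta) p u)%C.
Proof.
  intros Hu.
  rewrite <- (Cseries_ext _ _ (fun k => fracD_integrand_term u k Hu)), Cseries_Cmult_l.
  - ring.
  - apply ex_series_R_le with (2 := Hconv). intros k.
    rewrite Rabs_pos_eq by apply Cmod_ge_0. rewrite !Cmod_power_term.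
    assert (Hzu : Cmod (z * u) <= Cmod z).
    { rewrite Cmod_mult, Cmod_R, Rabs_pos_eq by lra. generalize (Cmod_ge_0 z). nra. }
    apply Rmult_le_compat_r; [left; apply Rinv_0_lt_compat, INR_fact_lt_0|].
    apply Rmult_le_compat_l; [apply Cmod_ge_0|].
    apply pow_incr. split; [apply Cmod_ge_0 | exact Hzu].
Qed.

Lemma ex_series_Cmod_power_term_Beta_p :
  ex_series (fun k => Cmod (power_term c z k * Beta_p (eta + INR k) (mu - eta) p)%C).
Proof.
  apply ex_series_R_le
    with (2 := ex_series_R_scal_l (sqrt 2 * (4 / fst p ^ 2)) _ ex_series_Cmod_power_term).
  intros k. rewrite Rabs_pos_eq by apply Cmod_ge_0.
  rewrite Cmod_mult, Rmult_comm.
  apply Rmult_le_compat_r; [apply Cmod_ge_0|].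
  apply Cmod_Beta_p_le; simpl; generalize (pos_INR k); lra.
Qed.

Lemma fracD_power_series :
  fracD (eta - mu) (fun t => Cpowc t (eta - 1) * Cseries (power_term c t))%C p z
  = (Cpowc z (mu - 1) * (/ CGamma (mu - eta)
      * Cseries (fun k => c k * Beta_p (eta + INR k) (mu - eta) p * z ^ k / INR (fact k))))%C.
Proof.
  set (w := Cpowc z (mu - 1)).
  set (Phi := fun k u => (w * power_term c z k * Beta_p_integrand (eta + INR k) (mu - eta) p u)%C).
  assert (Ha : forall k : nat, 0 <= fst (eta + INR k)%C)
    by (intros k; simpl; generalize (pos_INR k); lra).
  assert (Hb : 0 <= fst (mu - eta)%C) by (simpl; lra).
  unfold fracD. replace (- (eta - mu))%C with (mu - eta)%C by ring.
  rewrite (CRInt_ext _ (fun u => Cseries (fun k => Phi k u))).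
  2: { intros u Hu. rewrite Rmin_left, Rmax_right in Hu by lra.
       apply fracD_integrand_expansion, Hu. }
  rewrite (CRInt_Cseries Phi (fun k => Cmod w * (4 / fst p ^ 2) * Cmod (power_term c z k))).
  - rewrite (Cseries_ext _ (fun k => w * (power_term c z k * Beta_p (eta + INR k) (mu - eta) p))%C).
    2: { intros k. unfold Phi.
         rewrite CRInt_Cmult_l, <- Beta_p_CRInt by (apply ex_CRInt_Beta_p_integrand; auto).
         ring. }
    rewrite Cseries_Cmult_l by exact ex_series_Cmod_power_term_Beta_p.
    rewrite (Cseries_ext _
      (fun k => c k * Beta_p (eta + INR k) (mu - eta) p * z ^ k / INR (fact k))%C).
    + fold w. ring.
    + intros k. unfold power_term. field. apply INR_fact_neq_0_C.
  - intros k. apply ex_CRInt_Cmult_l, ex_CRInt_Beta_p_integrand; auto.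
  - intros k u Hu. unfold Phi. rewrite !Cmod_mult.
    replace (Cmod w * (4 / fst p ^ 2) * Cmod (power_term c z k))
      with (Cmod w * Cmod (power_term c z k) * (4 / fst p ^ 2)) by ring.
    apply Rmult_le_compat_l; [apply Rmult_le_pos; apply Cmod_ge_0|].
    apply Cmod_Beta_p_integrand_le_const; auto.
  - apply ex_series_R_scal_l, ex_series_Cmod_power_term.
Qed.

End FracDPowerSeries.

Theorem mainTheorem15 (m n : nat) (alpha : nat -> C) (A : nat -> R)
    (beta : nat -> C) (B : nat -> R) (eta mu p z : C)
    (HA : forall i, (i < m)%nat -> 0 < A i)
    (HB : forall j, (j < n)%nat -> 0 < B j)
    (Hp : 0 < fst p) (Heta : 0 < fst eta) (Hmu : fst eta < fst mu)
    (Hz : z <> RtoC 0)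
    (Hconv : ex_series (fun k =>
        Cmod (FWcoef m n alpha A beta B k) * Cmod z ^ k / INR (Factorial.fact k))) :
  fracD (Cminus eta mu)
        (fun t => Cmult (Cpowc t (Cminus eta (RtoC 1))) (FoxWright m n alpha A beta B t))
        p z
  = Cmult (Cpowc z (Cminus mu (RtoC 1))) (ExtWright m n alpha A beta B eta mu z p).
Proof.
  exact (fracD_power_series (FWcoef m n alpha A beta B) eta mu p z Hp Heta Hmu Hz Hconv).
Qed.
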